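(* Let $p$ be an odd prime and $\zeta=e^{2\pi\mathbf i/(p-1)}$. Then $$\prod_{1\le i<j\le \frac{p-1}{2}}(\zeta^{2j}-\zeta^{2i})=e^{\frac{(p-3)(3p+1)}{16}\pi\mathbf i}\cdot\Big(\frac{p-1}{2}\Big)^{\frac{p-1}{4}},$$ where $\big(\frac{p-1}{2}\big)^{\frac{p-1}{4}}$ denotes the positive real power.
   Context: $\mathbf i=\sqrt{-1}$. *)

From HB Require Import structures.
From mathcomp Require Import all_boot all_order all_algebra all_field.
Set Implicit Arguments. Unset Strict Implicit. Unset Printing Implicit Defensive.
Import Order.TTheory GRing.Theory Num.Theory.
Local Open Scope ring_scope.

(* Complex numbers are modelled by algC (algebraic complex numbers).
   For b > 0, [b.-root (-1)] is the b-th root of -1 with minimal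
   nonnegative argument, i.e. e^{pi i / b}. *)

Definition expipi (a b : nat) : algC := (b.-root (-1 : algC)) ^+ a.

(* pospow x a b = x^{a/b}, the positive real power, for x a positive real
   (b.-root x is then the positive real b-th root of x). *)
Definition pospow (x : algC) (a b : nat) : algC := (b.-root x) ^+ a.

Definition zeta (p : nat) : algC := expipi 2 (p.-1).

(* Put n = (p-1)/2 and r = e^(pi i / 2n), so that zeta = r^2 and r^n = i.
   Each factor is zeta^(2j) - zeta^(2i) = r^(2(i+j)+n) * 2 sin(pi (j-i)/n),
   so the product is a power of r, computed by summing exponents, times a
   positive real R.  Reflecting j to n+1-j and using sin(pi (n-d)/n) = sin(pi d/n)
   gives R^2 = (prod_(0<d<n) 2 sin(pi d/n))^n, and the inner product is
   prod_(0<d<n) (1 - w^d) = n for the primitive n-th root w = r^4.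
   No trigonometry is available for algC, whose [n.-root] is specified only as
   the root of largest real part in the closed upper half-plane; the real work
   is to show from this that r is e^(pi i / 2n), i.e. Im (r^k) > 0 for 0 < k < 2n. *)

From HB Require Import structures.
From mathcomp Require Import all_boot all_order all_algebra all_field.
From mathcomp Require Import ring lra zify.
Set Implicit Arguments. Unset Strict Implicit. Unset Printing Implicit Defensive.
Import Order.TTheory GRing.Theory Num.Theory.
Local Open Scope ring_scope.

Lemma nat_sign_change (P : pred nat) a b :
  (a <= b)%N -> P a -> ~~ P b -> exists2 i, (a <= i < b)%N & P i && ~~ P i.+1.
Proof.
move=> + Pa; elim: b => [|b IH] le_ab nPb.
  by move: le_ab Pa; rewrite leqn0 => /eqP ->; rewrite (negbTE nPb).
have [a_eq | ne_ab] := eqVneq a b.+1; first by rewrite -a_eq Pa in nPb.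
have le_ab' : (a <= b)%N by lia.
have [Pb | nPb'] := boolP (P b); first by exists b; rewrite ?Pb ?nPb ?le_ab' ?leqnn.
by have [i iab Pi] := IH le_ab' nPb'; exists i => //; lia.
Qed.

Lemma mulC_conj_norm1 (x : algC) : `|x| = 1 -> x * x^* = 1.
Proof. by move=> x1; rewrite -normCK x1 expr1n. Qed.

Lemma normX_eq1 (x : algC) k : (0 < k)%N -> `|x ^+ k| = 1 -> `|x| = 1.
Proof.
move=> k_gt0 /eqP; rewrite normrX pexprn_eq1 ?normr_ge0 //.
by rewrite eqn0Ngt k_gt0 => /eqP.
Qed.

(* [b * c - a * s < 0] says that a + b i has a smaller argument than c + s i. *)
Lemma upper_unit_arc_Re_lt (R : realDomainType) (a b c s : R) :
  a ^+ 2 + b ^+ 2 = 1 -> c ^+ 2 + s ^+ 2 = 1 -> 0 < s -> 0 <= b ->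
  b * c - a * s < 0 -> c < a.
Proof.
move=> ab1 cs1 s_gt0 b_ge0 lt_arg; rewrite ltNge; apply/negP => le_ac.
have [c_le0 | c_gt0] := lerP c 0.
  have le_bs : b <= s by nra.
  nra.
have a_gt0 : 0 < a by nra.
have le_sb : s <= b by nra.
nra.
Qed.

Lemma Re_lt_of_smaller_arg (x y : algC) : `|x| = 1 -> `|y| = 1 ->
  0 < 'Im y -> 0 <= 'Im x -> 'Im (x * y^*) < 0 -> 'Re y < 'Re x.
Proof.
move=> x1 y1 Iy_gt0 Ix_ge0 lt_arg.
apply: (@upper_unit_arc_Re_lt _ (in_algR (Creal_Re x)) (in_algR (Creal_Im x))
   (in_algR (Creal_Re y)) (in_algR (Creal_Im y))) => //.
- by apply: val_inj => /=; rewrite -normC2_Re_Im x1 expr1n.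
- by apply: val_inj => /=; rewrite -normC2_Re_Im y1 expr1n.
- by move: lt_arg; rewrite ImM Re_conj Im_conj; congr (_ < _) => /=; ring.
Qed.

Section RootOfMinusOne.

Variable m : nat.
Hypotheses (m_gt0 : (0 < m)%N) (m_even : ~~ odd m).
Let r := m.-root (-1 : algC).

Lemma rootCN1K : r ^+ m = -1.
Proof. exact: rootCK. Qed.

Lemma rootCN1_unity : r ^+ m.*2 = 1.
Proof. by rewrite -addnn exprD rootCN1K mulrNN mulr1. Qed.

Lemma norm_rootCN1 : `|r| = 1.
Proof. by rewrite norm_rootC normrN1 rootC1. Qed.

Lemma Im_rootCN1_gt0 : 0 < 'Im r.
Proof.
have m_gt1 : (1 < m)%N by case: m m_gt0 m_even => [|[|]].
rewrite lt0r Im_rootC_ge0 // andbT; apply/negP => /eqP/(Creal_ImP r) rR.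
have : 0 <= r ^+ m.
  rewrite -[m]odd_double_half (negbTE m_even) add0n -addnn exprD -expr2.
  by rewrite -real_normK ?rpredX // exprn_ge0.
by rewrite rootCN1K oppr_ge0 ler10.
Qed.

Lemma rootCN1_min_arg (y : algC) : y ^+ m = -1 -> 0 <= 'Im y -> ~ 'Im (y * r^*) < 0.
Proof.
move=> yN1 Iy_ge0 lt_arg.
have y1 : `|y| = 1 by apply: (normX_eq1 m_gt0); rewrite yN1 normrN1.
have := Re_lt_of_smaller_arg y1 norm_rootCN1 Im_rootCN1_gt0 Iy_ge0 lt_arg.
by move/lt_le_trans/(_ (rootC_Re_max m_gt0 yN1 Iy_ge0)); rewrite ltxx.
Qed.

(* Otherwise x * r or x^* would be an m-th root of -1 in the upper half-plane
   with a smaller argument than [r]. *)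
Lemma Im_mul_rootCN1_le0 (x : algC) : x ^+ m.*2 = 1 -> 'Im x < 0 -> 'Im (x * r) <= 0.
Proof.
move=> x_unity Ix_lt0; rewrite real_leNgt ?Creal_Im ?real0 //; apply/negP => Ixr_gt0.
have rr : r * r^* = 1 := mulC_conj_norm1 norm_rootCN1.
have : ((x * r) ^+ m) ^+ 2 == 1.
  by rewrite -exprM muln2 exprMn x_unity rootCN1_unity mulr1.
rewrite sqrf_eq1 => /orP[/eqP xrm | /eqP xrm].
- have xm : x ^+ m = -1.
    by move: xrm; rewrite exprMn rootCN1K mulrN1 => /eqP; rewrite eqr_oppLR => /eqP.
  apply: (rootCN1_min_arg (y := x^*)).
  + by rewrite -rmorphXn xm /= conjCN1.
  + by rewrite Im_conj oppr_ge0 ltW.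
  + by rewrite -rmorphM Im_conj oppr_lt0.
- apply: (rootCN1_min_arg xrm (ltW Ixr_gt0)).
  by rewrite -mulrA rr mulr1.
Qed.

(* For w a primitive 2m-th root of unity, the w * r^i are never real and
   change sign when i increases by K, so one of the steps i -> i + 1 crosses
   the positive real axis. *)
Lemma rootCN1X_neqN1 K : (0 < K < m)%N -> r ^+ K != -1.
Proof.
move=> /andP[K_gt0 K_lt_m]; apply/eqP => rK.
have m2_gt0 : (0 < m.*2)%N by rewrite double_gt0.
have [w w_prim] := C_prim_root_exists m2_gt0.
pose x i := w * r ^+ i.
have x_unity i : x i ^+ m.*2 = 1.
  by rewrite exprMn prim_expr_order // exprAC rootCN1_unity expr1n mulr1.
have xK i : x (i + K)%N = - x i by rewrite /x exprD rK mulrN1 mulrN.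
have xK0 : x K = - x 0%N by exact: xK 0%N.
have Ix_neq0 i : 'Im (x i) != 0.
  apply/negP => /eqP/(Creal_ImP (x i)) xR.
  have x2 : x i ^+ 2 = 1.
    by rewrite -real_normK // (normX_eq1 m2_gt0) ?x_unity ?normr1 ?expr1n.
  have r2K : r ^+ (2 * K) = 1 by rewrite mulnC exprM rK sqrrN expr1n.
  have : (x i ^+ 2) ^+ K == 1 by rewrite x2 expr1n.
  rewrite -exprM exprMn -exprM (mulnC i) [r ^+ _]exprM r2K expr1n mulr1.
  by rewrite -(prim_order_dvd w_prim) => /dvdn_leq; lia.
pose P i := 'Im (x i) < 0.
have Ix_gt0 i : ~~ P i -> 0 < 'Im (x i).
  by rewrite /P -real_leNgt ?real0 ?Creal_Im // lt_neqAle eq_sym Ix_neq0.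
have [a [b [le_ab Pa nPb]]] : exists a b, [/\ (a <= b)%N, P a & ~~ P b].
  have [P0 | nP0] := boolP (P 0%N).
    by exists 0%N, K; rewrite /P xK0 raddfN oppr_lt0 (lt_gtF P0).
  exists K, (K + K)%N; rewrite leq_addr /P xK xK0 opprK.
  by rewrite raddfN oppr_lt0 Ix_gt0.
have [i _ /andP[Pi nPi1]] := nat_sign_change le_ab Pa nPb.
have := Im_mul_rootCN1_le0 (x_unity i) Pi.
by rewrite /x -mulrA -exprSr => /le_gtF; rewrite Ix_gt0.
Qed.

(* For the least K > 0 with Im (r^K) <= 0, the step from r^(K-1) to r^K would
   have to cross the negative real axis, hence land on -1. *)
Lemma Im_rootCN1X_gt0 k : (0 < k < m)%N -> 0 < 'Im (r ^+ k).
Proof.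
move=> /andP[k_gt0 k_lt_m]; apply: contraT => Irk_le0; exfalso.
have ex_K : exists K, (0 < K)%N && ~~ (0 < 'Im (r ^+ K)) by exists k; rewrite k_gt0.
have [K /andP[K_gt0 IrK_le0] K_min] := ex_minnP ex_K.
have K_le_k : (K <= k)%N by apply: K_min; rewrite k_gt0.
have Ir_below_K j : (0 < j < K)%N -> 0 < 'Im (r ^+ j).
  move=> /andP[j_gt0 j_lt_K]; apply: contraT => Irj.
  by have := K_min j; rewrite j_gt0 Irj => /(_ isT); lia.
have K_gt1 : (1 < K)%N.
  case: K K_gt0 IrK_le0 {K_min K_le_k Ir_below_K} => [|[|]] //.
  by rewrite expr1 Im_rootCN1_gt0.
set u := r ^+ K.-1.
have rK : r ^+ K = u * r by rewrite -exprSr prednK.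
have Iu_gt0 : 0 < 'Im u by apply: Ir_below_K; lia.
have IrK_ge0 : 0 <= 'Im (r ^+ K).
  have Nu_unity : (- u) ^+ m.*2 = 1.
    by rewrite -mul2n exprM sqrrN -exprM mul2n exprAC rootCN1_unity expr1n.
  have := Im_mul_rootCN1_le0 Nu_unity; rewrite raddfN oppr_lt0 mulNr raddfN.
  by rewrite oppr_le0 -rK => ->.
have /Creal_ImP rK_real : 'Im (r ^+ K) = 0.
  by apply/eqP; move: IrK_ge0; rewrite le_eqVlt (negbTE IrK_le0) orbF eq_sym.
have : (r ^+ K) ^+ 2 == 1 by rewrite -real_normK // normrX norm_rootCN1 !expr1n.
rewrite sqrf_eq1 => /orP[/eqP rK1 | /eqP rKN1].
- have u_conj : u = r^*.
    by rewrite -[u]mulr1 -(mulC_conj_norm1 norm_rootCN1) mulrA -rK rK1 mul1r.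
  by move: Iu_gt0; rewrite u_conj Im_conj oppr_gt0 => /(lt_trans Im_rootCN1_gt0); rewrite ltxx.
- have K_lt_m : (K < m)%N by lia.
  by move/eqP: rKN1; apply/negP/rootCN1X_neqN1; rewrite K_gt0 K_lt_m.
Qed.

Lemma prim_rootCN1 : (m.*2).-primitive_root r.
Proof.
have m2_gt0 : (0 < m.*2)%N by rewrite double_gt0.
have [d d_prim d_dvd] := prim_order_exists m2_gt0 rootCN1_unity.
have [<- // | d_neq] := eqVneq d m.*2.
have rd1 : r ^+ d = 1 := prim_expr_order d_prim.
have d_gt0 := prim_order_gt0 d_prim.
have [d_lt_m | d_ge_m] := ltnP d m.
  have := @Im_rootCN1X_gt0 d; rewrite d_gt0 d_lt_m rd1 => /(_ isT).
  by rewrite (Creal_ImP _ _) ?rpred1 // ltxx.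
have d_eq_m : d = m.
  case/dvdnP: d_dvd d_neq => q m2E; rewrite m2E.
  case: q m2E => [|[|q]] m2E; rewrite ?mul0n ?mul1n ?eqxx //; move: m2E; rewrite -muln2; nia.
by move: rd1; rewrite d_eq_m rootCN1K => /eqP; rewrite lt_eqF // (lt_trans (ltrN10 _) ltr01).
Qed.

End RootOfMinusOne.

Lemma double_Im_norm1 (z : algC) : `|z| = 1 -> 2 * 'Im z = 'i * z^* * (1 - z ^+ 2).
Proof.
move=> z1; rewrite ImE mulrC divfK ?pnatr_eq0 // -mulrA; congr (_ * _).
by rewrite mulrBr mulr1 expr2 mulrA (mulrC z^*) (mulC_conj_norm1 z1) mul1r.
Qed.

Lemma prod_one_sub_prim_root (R : fieldType) n (w : R) : n.-primitive_root w ->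
  \prod_(1 <= d < n) (1 - w ^+ d) = n%:R.
Proof.
move=> w_prim; have n_gt0 := prim_order_gt0 w_prim.
have factor := factor_Xn_sub_1 w_prim.
rewrite big_ltn // expr0 subrX1 in factor.
have := congr1 (fun q => q.[1]) (mulfI (negbT (polyXsubC_eq0 1)) factor).
rewrite /= horner_prod horner_sum.
under eq_bigr do rewrite hornerXsubC.
under [X in _ = X -> _]eq_bigr do rewrite hornerXn expr1n.
by rewrite sumr_const card_ord.
Qed.

Lemma sum_double n : (\sum_(1 <= d < n) 2 * d = n * (n - 1))%N.
Proof.
elim: n => [|n IH]; first by rewrite big_geq.
case: n IH => [|n] IH; first by rewrite big_geq.
by rewrite big_nat_recr //= IH; nia.
Qed.

Lemma sum_pair_exponents c N :
  (2 * \sum_(1 <= j < N + 1) \sum_(1 <= i < j) (2 * (i + j) + c)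
   = N * (N - 1) * (2 * N + 2 + c))%N.
Proof.
have inner j : (\sum_(1 <= i < j) (2 * (i + j) + c) = (j - 1) * (3 * j + c))%N.
  case: j => [|j]; first by rewrite big_geq.
  rewrite (eq_bigr (fun i => 2 * i + (2 * j.+1 + c)))%N; last by move=> i _; lia.
  by rewrite big_split /= sum_double sum_nat_const_nat; nia.
under eq_bigr do rewrite inner.
elim: N => [|N IH]; first by rewrite big_geq.
rewrite addn1 big_nat_recr //= mulnDr -(addn1 N) IH addnK.
by case: N {IH} => [|N] //; rewrite subSS subn0; nia.
Qed.

Lemma rootCN1_half n : (0 < n)%N -> ((n.*2).-root (-1 : algC)) ^+ n = 'i.
Proof.
move=> n_gt0; have n2_gt0 : (0 < n.*2)%N by rewrite double_gt0.
have Ix_gt0 := @Im_rootCN1X_gt0 _ n2_gt0 (negbT (odd_double n)) n.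
have /eqP : (n.*2.-root (-1 : algC) ^+ n) ^+ 2 = 'i ^+ 2.
  by rewrite sqrCi -exprM muln2 rootCK.
rewrite eqf_sqr => /orP[/eqP // | /eqP xE].
have := Ix_gt0 ltac:(rewrite n_gt0 -addnn; lia).
by rewrite xE -mulN1r ImMl ?rpredN ?rpred1 // Im_i mulr1 oppr_gt0 ltr10.
Qed.

Lemma sqr_sub1_norm1 (z : algC) : `|z| = 1 -> z ^+ 2 - 1 = z * 'i * (2 * 'Im z).
Proof.
move=> z1; rewrite double_Im_norm1 // mulrA (mulrC z 'i) mulrACA mulCii.
by rewrite (mulC_conj_norm1 z1) mulr1 mulN1r opprB.
Qed.

Section Chords.

Variable n : nat.
Hypothesis n_gt0 : (0 < n)%N.
Let r := (n.*2).-root (-1 : algC).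
Let n2_gt0 : (0 < n.*2)%N. Proof. by rewrite double_gt0. Qed.

(* [chord d] = 2 sin (pi d / n) = |zeta^(2j) - zeta^(2i)| when j - i = d. *)
Definition chord d := 2 * 'Im (r ^+ (2 * d)).

Lemma chord_gt0 d : (0 < d < n)%N -> 0 < chord d.
Proof.
move=> /andP[d_gt0 d_lt_n]; rewrite mulr_gt0 ?ltr0n //.
by apply: Im_rootCN1X_gt0; rewrite ?odd_double //; lia.
Qed.

Lemma norm_rootCN1X k : `|r ^+ k| = 1.
Proof. by rewrite normrX norm_rootCN1 // expr1n. Qed.

Lemma chordC d : (d <= n)%N -> chord (n - d) = chord d.
Proof.
move=> d_le_n; rewrite /chord; congr (2 * _); set z := r ^+ (2 * d).
have -> : r ^+ (2 * (n - d)) = - z^*.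
  rewrite -[LHS]mulr1 -(mulC_conj_norm1 (norm_rootCN1X (2 * d))) mulrA -exprD.
  by rewrite (_ : 2 * (n - d) + 2 * d = n.*2)%N ?rootCN1K ?mulN1r //; lia.
by rewrite -mulN1r ImMl ?rpredN ?rpred1 // Im_conj mulN1r opprK.
Qed.

Lemma prim_root_rootCN1X4 : n.-primitive_root (r ^+ 4).
Proof.
have n_dvd : (n %| n.*2.*2)%N by rewrite -!muln2 -mulnA dvdn_mulr.
have := dvdn_prim_root (prim_rootCN1 n2_gt0 (negbT (odd_double n))) n_dvd.
by rewrite (_ : n.*2.*2 %/ n = 4)%N // -!muln2 -mulnA mulKn.
Qed.

Lemma prod_chord : \prod_(1 <= d < n) chord d = n%:R.
Proof.
have chordE d : chord d = ('i * (r ^+ (2 * d))^*) * (1 - (r ^+ 4) ^+ d).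
  by rewrite /chord double_Im_norm1 ?norm_rootCN1X // -!exprM mulnAC.
rewrite (eq_bigr _ (fun d _ => chordE d)) big_split /=.
rewrite (prod_one_sub_prim_root prim_root_rootCN1X4) big_split /= prodr_const_nat.
under eq_bigr do rewrite rmorphXn.
rewrite prodrXr sum_double -(rootCN1_half n_gt0) -exprM -exprMn.
by rewrite (mulC_conj_norm1 (norm_rootCN1 n2_gt0)) expr1n mul1r.
Qed.

Lemma sub_even_powers i j : (i <= j)%N ->
  (r ^+ 2) ^+ (2 * j) - (r ^+ 2) ^+ (2 * i) = r ^+ (2 * (i + j) + n) * chord (j - i).
Proof.
move=> le_ij; set z := r ^+ (2 * (j - i)).
have -> : (r ^+ 2) ^+ (2 * j) = r ^+ (4 * i) * z ^+ 2.
  by rewrite -!exprM -exprD; congr (_ ^+ _); lia.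
have -> : (r ^+ 2) ^+ (2 * i) = r ^+ (4 * i) by rewrite -exprM; congr (_ ^+ _); lia.
have -> : r ^+ (2 * (i + j) + n) = r ^+ (4 * i) * z * 'i.
  by rewrite -(rootCN1_half n_gt0) -!exprD; congr (_ ^+ _); lia.
rewrite /chord -/z -[X in _ - X]mulr1 -mulrBr (sqr_sub1_norm1 (norm_rootCN1X _)).
by rewrite !mulrA.
Qed.

Definition chord_prod j := \prod_(1 <= d < j) chord d.

Lemma chord_prodC j : (0 < j <= n)%N ->
  chord_prod j * chord_prod (n + 1 - j) = chord_prod n.
Proof.
elim: j => [// | j IH] /andP[_ j_lt_n].
case: j IH j_lt_n => [|j] IH j_lt_n.
  by rewrite /chord_prod [X in X * _]big_geq // mul1r addnK.
have rec_up : chord_prod j.+2 = chord_prod j.+1 * chord j.+1.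
  by rewrite /chord_prod big_nat_recr.
have rec_down : chord_prod (n - j) = chord_prod (n - j.+1) * chord j.+1.
  rewrite -(chordC (ltnW j_lt_n)) /chord_prod (_ : n - j = (n - j.+1).+1)%N; last by lia.
  by rewrite big_nat_recr //; lia.
rewrite (_ : n + 1 - j.+2 = n - j.+1)%N; last by lia.
rewrite rec_up -(IH _); last by lia.
rewrite (_ : n + 1 - j.+1 = n - j)%N; last by lia.
by rewrite rec_down mulrAC -mulrA.
Qed.

Lemma prod_chord_sqr :
  (\prod_(1 <= j < n + 1) \prod_(1 <= i < j) chord (j - i)) ^+ 2 = n%:R ^+ n.
Proof.
have inner j : \prod_(1 <= i < j) chord (j - i) = chord_prod j.
  rewrite /chord_prod big_nat_rev; apply: eq_big_nat => i /andP[i_ge1 i_lt_j].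
  by congr (chord _); lia.
under eq_bigr do rewrite inner.
rewrite expr2 {2}big_nat_rev -big_split /=.
rewrite (eq_big_nat _ _ (F2 := fun _ => chord_prod n)); last first.
  move=> j /andP[j_ge1 j_le_n]; rewrite (_ : 1 + (n + 1) - j.+1 = n + 1 - j)%N; last by lia.
  by apply: chord_prodC; lia.
by rewrite prodr_const_nat addnK /chord_prod prod_chord.
Qed.

Lemma prod_phases :
  \prod_(1 <= j < n + 1) \prod_(1 <= i < j) r ^+ (2 * (i + j) + n)
  = 16.-root (-1 : algC) ^+ (4 * ((n - 1) * (3 * n + 2))).
Proof.
under eq_bigr do rewrite prodrXr.
rewrite prodrXr; set T := (\sum_(1 <= j < n + 1) _)%N.
set X := ((n - 1) * (3 * n + 2))%N.
have X_even : ~~ odd X by rewrite /X oddM oddD oddM oddB //=; case: (odd n).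
have X_half : X = (X./2).*2 by rewrite halfK (negbTE X_even) subn0.
have T_eq : T = (n * X./2)%N.
  apply/eqP; rewrite -(eqn_pmul2l (isT : (0 < 2)%N)) sum_pair_exponents.
  by rewrite mulnCA (mul2n X./2) -X_half /X mulnA; apply/eqP; congr (_ * _); lia.
rewrite T_eq exprM (rootCN1_half n_gt0) -(@rootCN1_half 8) // -exprM.
by congr (_ ^+ _); rewrite [in RHS]X_half -muln2; lia.
Qed.

Lemma prod_chords :
  \prod_(1 <= j < n + 1) \prod_(1 <= i < j) chord (j - i) = 4.-root (n%:R : algC) ^+ n.*2.
Proof.
apply/eqP; rewrite -(@eqrXn2 _ 2) //; first last.
- by rewrite exprn_ge0 // rootC_ge0 // ler0n.
- rewrite big_seq prodr_ge0 // => j; rewrite mem_index_iota => /andP[j_ge1 j_le_n].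
  rewrite big_seq prodr_ge0 // => i; rewrite mem_index_iota => /andP[i_ge1 i_lt_j].
  by rewrite ltW // chord_gt0 //; lia.
rewrite prod_chord_sqr -exprM (_ : n.*2 * 2 = 4 * n)%N; last by lia.
by rewrite exprM rootCK.
Qed.

Lemma prod_sub_even_powers :
  \prod_(1 <= j < n + 1) \prod_(1 <= i < j) ((r ^+ 2) ^+ (2 * j) - (r ^+ 2) ^+ (2 * i))
  = 16.-root (-1) ^+ (4 * ((n - 1) * (3 * n + 2))) * 4.-root n%:R ^+ n.*2.
Proof.
rewrite -prod_phases -prod_chords -big_split; apply: eq_bigr => j _ /=.
rewrite -big_split; apply: eq_big_nat => i /andP[_ lt_ij] /=.
exact: sub_even_powers (ltnW lt_ij).
Qed.

End Chords.

Theorem mainTheorem7 (p : nat) (hp : prime p) (hodd : odd p) :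
  \prod_(1 <= j < (p.-1)./2 + 1) \prod_(1 <= i < j)
      (zeta p ^+ (2 * j) - zeta p ^+ (2 * i))
  = expipi ((p - 3) * (3 * p + 1)) 16 * pospow (((p.-1)./2)%:R) p.-1 4.
Proof.
have p_gt1 := prime_gt1 hp.
set n := (p.-1)./2.
have p1E : p.-1 = n.*2.
  by rewrite /n halfK; case: (p) hodd => //= q /negbTE ->; rewrite subn0.
have n_gt0 : (0 < n)%N by rewrite -double_gt0 -p1E; lia.
have expE : ((p - 3) * (3 * p + 1) = 4 * ((n - 1) * (3 * n + 2)))%N.
  have pE : p = n.*2.+1 by rewrite -p1E prednK // ltnW.
  by rewrite pE -muln2; nia.
by rewrite /zeta /expipi /pospow expE p1E prod_sub_even_powers.
Qed.
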